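(* Let $\Omega = [a,b)$ be a bounded interval with periodic boundary conditions, let $k \ge 0$ be an integer, let $T_k$ be the space of real-valued trigonometric polynomials on $\Omega$ of degree at most $k$, and let $P$ denote the $L^2(\Omega)$-orthogonal projection onto $T_k$. Let $u \colon I \to T_k$ (with $I$ an open time interval) be a continuously differentiable solution of the Fourier Galerkin semidiscretization of the Benjamin-Bona-Mahony equation \[ \partial_t u = -(\operatorname{I} - \partial_x^2)^{-1} \partial_x P \frac{u^2}{2}. \] Then the mass, momentum, and energy \[ \mathcal{M} = \int_\Omega u \,\mathrm{d}x, \qquad \mathcal{P} = \int_\Omega \Bigl( \tfrac{1}{2} u^2 + \tfrac{1}{2} (u_x)^2 \Bigr) \mathrm{d}x, \qquad \mathcal{E} = \int_\Omega \tfrac{1}{6} u^3 \,\mathrm{d}x \] are constant in time along $u$.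
   Context: $(\operatorname{I} - \partial_x^2)^{-1}$ denotes the inverse of $\operatorname{I} - \partial_x^2$ acting on periodic functions on $\Omega$; it maps $T_k$ to itself. The semidiscretization is an ODE on the finite-dimensional space $T_k$. *)

From Stdlib Require Import Reals.
From Coquelicot Require Import Coquelicot.
Open Scope R_scope.

Definition trigpoly (L : R) (k : nat) (c d : nat -> R) (x : R) : R :=
  c 0%nat + sum_n_m (fun j => c j * cos (2 * PI * INR j * x / L)
                          + d j * sin (2 * PI * INR j * x / L)) 1 k.

(* f belongs to T_k, the trigonometric polynomials of degree <= k on the
   periodic interval Omega = [a,b) (functions on R, (b-a)-periodic). *)
Definition in_Tk (a b : R) (k : nat) (f : R -> R) : Prop :=
  exists c d : nat -> R, forall x, f x = trigpoly (b - a) k c d x.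

Definition is_L2proj (a b : R) (k : nat) (f p : R -> R) : Prop :=
  in_Tk a b k p /\
  forall g, in_Tk a b k g -> RInt (fun x => (f x - p x) * g x) a b = 0.

Definition in_I (t0 t1 : Rbar) (t : R) : Prop := Rbar_lt t0 t /\ Rbar_lt t t1.

(* u : I -> T_k continuously differentiable: its coordinates in the basis
   1, cos(2 pi j x/L), sin(2 pi j x/L) (j = 1..k) are C^1 on I. *)
Definition C1_in_Tk (a b : R) (k : nat) (t0 t1 : Rbar) (u : R -> R -> R) : Prop :=
  exists c d : nat -> R -> R,
    (forall j, (j <= k)%nat -> forall t, in_I t0 t1 t ->
       ex_derive (c j) t /\ continuous (Derive (c j)) t /\
       ex_derive (d j) t /\ continuous (Derive (d j)) t) /\
    (forall t, in_I t0 t1 t -> forall x,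
       u t x = trigpoly (b - a) k (fun j => c j t) (fun j => d j t) x).

(* u solves  d_t u = -(I - d_x^2)^{-1} d_x P (u^2/2)  on I.
   Writing w = d_t u(t,.) and p = P(u^2/2), this says w is the (unique)
   element of T_k with (I - d_x^2) w = - d_x p. *)
Definition bbm_galerkin_solution (a b : R) (k : nat) (t0 t1 : Rbar)
    (u : R -> R -> R) : Prop :=
  forall t, in_I t0 t1 t ->
    exists p : R -> R,
      is_L2proj a b k (fun x => (u t x) ^ 2 / 2) p /\
      in_Tk a b k (fun x => Derive (fun s => u s x) t) /\
      forall x,
        Derive (fun s => u s x) t
        - Derive_n (fun y => Derive (fun s => u s y) t) 2 x
        = - Derive p x.

Definition mass (a b : R) (v : R -> R) : R := RInt v a b.
Definition momentum (a b : R) (v : R -> R) : R :=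
  RInt (fun x => (v x) ^ 2 / 2 + (Derive v x) ^ 2 / 2) a b.
Definition energy (a b : R) (v : R -> R) : R :=
  RInt (fun x => (v x) ^ 3 / 6) a b.

(* Along the flow, each conserved quantity has time derivative int_a^b F(u, w)
   with w = d_t u, and F is the x-derivative of a periodic function up to terms
   killed by the Galerkin structure.  The projection lets us replace
   p = P(u^2/2) by u^2/2 when tested against u_x or w, both in T_k, and
   w - w'' = -p' trades w'' for p'.  For the energy write p = Q - Q'' with
   Q in T_k: then int p w = int Q (w - w'') = -int Q p' = -int Q (Q' - Q''') = 0,
   the skew-symmetry of (I - d_x^2)^{-1} d_x. *)

From Stdlib Require Import Reals Lra Lia FunctionalExtensionality.
From Coquelicot Require Import Coquelicot.
Open Scope R_scope.

(* [auto_derive] eta-expands unknown functions to [fun y => f y], which [ring]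
   and [lra] would treat as atoms distinct from [f]. *)
Ltac eta_reduce :=
  repeat match goal with |- context [fun y => ?f y] => change (fun y => f y) with f end.

Lemma is_derive_sum_n_m (F : nat -> R -> R) (dF : nat -> R) (s : R) (m n : nat) :
  (forall j, (m <= j <= n)%nat -> is_derive (F j) s (dF j)) ->
  is_derive (fun z => sum_n_m (fun j => F j z) m n) s (sum_n_m dF m n).
Proof.
  intros HF. destruct (Nat.le_gt_cases m n) as [Hmn|Hmn].
  - induction Hmn as [|n Hmn IH].
    + rewrite sum_n_n. apply (is_derive_ext (F m)); [intros; now rewrite sum_n_n|].
      apply HF; lia.
    + rewrite sum_n_Sm by lia.
      apply (is_derive_ext (fun z => sum_n_m (fun j => F j z) m n + F (S n) z)).
      { intros z. now rewrite sum_n_Sm by lia. }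
      apply (is_derive_plus (fun z => sum_n_m (fun j => F j z) m n) (F (S n)));
        [apply IH; intros j Hj|]; apply HF; lia.
  - rewrite sum_n_m_zero by lia.
    apply (is_derive_ext (fun _ => 0)); [intros; now rewrite sum_n_m_zero|].
    auto_derive; auto.
Qed.

Lemma continuity_2d_pt_sum_n_m (F : nat -> R -> R -> R) (s x : R) (m n : nat) :
  (forall j, (m <= j <= n)%nat -> continuity_2d_pt (F j) s x) ->
  continuity_2d_pt (fun u v => sum_n_m (fun j => F j u v) m n) s x.
Proof.
  intros HF. destruct (Nat.le_gt_cases m n) as [Hmn|Hmn].
  - induction Hmn as [|n Hmn IH].
    + apply (continuity_2d_pt_ext (F m)); [intros; now rewrite sum_n_n|].
      apply HF; lia.
    + apply (continuity_2d_pt_ext (fun u v => sum_n_m (fun j => F j u v) m n + F (S n) u v)).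
      { intros u v. now rewrite sum_n_Sm by lia. }
      apply continuity_2d_pt_plus; [apply IH; intros j Hj|]; apply HF; lia.
  - apply (continuity_2d_pt_ext (fun _ _ => 0)); [intros; now rewrite sum_n_m_zero|].
    apply continuity_2d_pt_const.
Qed.

Lemma continuity_2d_pt_fst (f : R -> R) (s x : R) :
  continuous f s -> continuity_2d_pt (fun u _ => f u) s x.
Proof.
  intros Hf. apply (continuity_1d_2d_pt_comp f (fun u _ => u)).
  - now apply continuity_pt_filterlim.
  - apply continuity_2d_pt_id1.
Qed.

Lemma continuity_2d_pt_snd (g : R -> R) (s x : R) :
  continuous g x -> continuity_2d_pt (fun _ v => g v) s x.
Proof.
  intros Hg. apply (continuity_1d_2d_pt_comp g (fun _ v => v)).
  - now apply continuity_pt_filterlim.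
  - apply continuity_2d_pt_id2.
Qed.

Lemma is_derive_RInt_param_cont (f df : R -> R -> R) (a b t : R) :
  locally t (fun s => forall x, is_derive (fun z => f z x) s (df s x)) ->
  (forall x, continuity_2d_pt df t x) ->
  locally t (fun s => forall x, continuous (f s) x) ->
  is_derive (fun s => RInt (f s) a b) t (RInt (df t) a b).
Proof.
  intros Hdf Hcont Hf.
  replace (RInt (df t) a b) with (RInt (fun x => Derive (fun z => f z x) t) a b).
  2:{ apply RInt_ext. intros x _. apply is_derive_unique, (locally_singleton _ _ Hdf). }
  apply is_derive_RInt_param.
  - refine (filter_imp _ _ _ Hdf). intros s Hs x _. eexists; apply Hs.
  - intros x _. apply (continuity_2d_pt_ext_loc df); [|apply Hcont].
    destruct Hdf as [eps Heps]. exists eps. intros s y Hs _.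
    symmetry. apply is_derive_unique, Heps, Hs.
  - refine (filter_imp _ _ _ Hf). intros s Hs.
    apply (ex_RInt_continuous (V := R_CompleteNormedModule)). intros; apply Hs.
Qed.

Lemma RInt_derive_periodic (H h : R -> R) (a b : R) :
  (forall x, is_derive H x (h x)) -> (forall x, continuous h x) -> H b = H a ->
  RInt h a b = 0.
Proof.
  intros HH Hh Hper. apply is_RInt_unique.
  replace 0 with (minus (H b) (H a)) by (rewrite Hper; unfold minus, plus, opp; simpl; ring).
  apply (is_RInt_derive (V := R_CompleteNormedModule)); auto.
Qed.

Lemma RInt_eq0_of_periodic_primitive (F G H : R -> R) (r a b : R) :
  (forall x, is_derive H x (F x + r * G x)) ->
  (forall x, continuous F x) -> (forall x, continuous G x) ->
  H b = H a -> RInt G a b = 0 -> RInt F a b = 0.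
Proof.
  intros HH HF HG Hper HG0.
  assert (Hex : forall f : R -> R, (forall x, continuous f x) -> ex_RInt f a b).
  { intros f Hf. apply (ex_RInt_continuous (V := R_CompleteNormedModule)); auto. }
  assert (HFG : RInt (fun x => F x + r * G x) a b = 0).
  { apply (RInt_derive_periodic H); auto. intros x.
    apply (continuous_plus F (fun x => r * G x)); auto.
    apply (continuous_mult (fun _ => r) G); auto using continuous_const. }
  assert (Hsplit : RInt (fun x => F x + r * G x) a b = RInt F a b + r * RInt G a b).
  { rewrite (RInt_plus (V := R_CompleteNormedModule) F (fun x => r * G x)); auto.
    - apply (f_equal (Rplus (RInt F a b))).
      apply (RInt_scal (V := R_CompleteNormedModule) G a b r); auto.
    - apply (ex_RInt_scal (V := R_CompleteNormedModule) G a b r); auto. }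
  rewrite Hsplit, HG0 in HFG. lra.
Qed.

Lemma in_I_locally (t0 t1 : Rbar) (t : R) : in_I t0 t1 t -> locally t (in_I t0 t1).
Proof.
  intros [H0 H1]. apply (filter_and _ _ (open_Rbar_gt' t t0 H0) (open_Rbar_lt' t t1 H1)).
Qed.

Lemma eq_is_derive_in_I (Phi dPhi : R -> R) (t0 t1 : Rbar) (t s : R) :
  (forall r, in_I t0 t1 r -> is_derive Phi r (dPhi r)) ->
  (forall r, in_I t0 t1 r -> dPhi r = 0) ->
  in_I t0 t1 t -> in_I t0 t1 s -> Phi t = Phi s.
Proof.
  intros HPhi HdPhi. revert t s.
  assert (Hlt : forall t s, in_I t0 t1 t -> in_I t0 t1 s -> t < s -> Phi t = Phi s).
  { intros t s [Ht0 _] [_ Hs1] Hts. apply eq_is_derive; auto.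
    intros r Hr.
    assert (HIr : in_I t0 t1 r).
    { split.
      - apply (Rbar_lt_le_trans _ t); [exact Ht0 | simpl; lra].
      - apply (Rbar_le_lt_trans _ s); [simpl; lra | exact Hs1]. }
    specialize (HPhi r HIr). rewrite (HdPhi r HIr) in HPhi. exact HPhi. }
  intros t s Ht Hs. destruct (Rtotal_order t s) as [Hts|[->|Hst]]; auto.
  symmetry; auto.
Qed.

Lemma is_derive_sq_half (f : R -> R) (t l : R) :
  is_derive f t l -> is_derive (fun s => f s ^ 2 / 2) t (f t * l).
Proof.
  intros Hf. auto_derive; [exists l; exact Hf|].
  eta_reduce. rewrite (is_derive_unique f t l Hf). field.
Qed.

Lemma is_derive_cube_sixth (f : R -> R) (t l : R) :
  is_derive f t l -> is_derive (fun s => f s ^ 3 / 6) t (f t ^ 2 / 2 * l).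
Proof.
  intros Hf. auto_derive; [exists l; exact Hf|].
  eta_reduce. rewrite (is_derive_unique f t l Hf). field.
Qed.

Definition freq (L : R) (j : nat) : R := 2 * PI * INR j / L.

Definition dcos (L : R) (d : nat -> R) (j : nat) : R := freq L j * d j.
Definition dsin (L : R) (c : nat -> R) (j : nat) : R := - (freq L j * c j).

Lemma trigpoly_freq (L : R) (k : nat) (c d : nat -> R) (x : R) :
  trigpoly L k c d x =
  c 0%nat + sum_n_m (fun j => c j * cos (freq L j * x) + d j * sin (freq L j * x)) 1 k.
Proof.
  unfold trigpoly, freq. f_equal. apply sum_n_m_ext. intros j.
  replace (2 * PI * INR j / L * x) with (2 * PI * INR j * x / L) by (unfold Rdiv; ring).
  reflexivity.
Qed.

Lemma is_derive_trigpoly (L : R) (k : nat) (c d : nat -> R) (x : R) :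
  is_derive (trigpoly L k c d) x (trigpoly L k (dcos L d) (dsin L c) x).
Proof.
  apply (is_derive_ext (fun y => c 0%nat + sum_n_m (fun j =>
    c j * cos (freq L j * y) + d j * sin (freq L j * y)) 1 k)).
  { intros y. now rewrite trigpoly_freq. }
  rewrite trigpoly_freq.
  replace (dcos L d 0%nat) with 0 by (unfold dcos, freq; rewrite INR_0; unfold Rdiv; ring).
  apply (is_derive_plus (fun _ => c 0%nat)
    (fun y => sum_n_m (fun j => c j * cos (freq L j * y) + d j * sin (freq L j * y)) 1 k)).
  - auto_derive; auto.
  - apply (is_derive_sum_n_m (fun j y => c j * cos (freq L j * y) + d j * sin (freq L j * y))).
    intros j _. auto_derive; auto. unfold dcos, dsin. ring.
Qed.

Lemma Derive_trigpoly (L : R) (k : nat) (c d : nat -> R) :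
  Derive (trigpoly L k c d) = trigpoly L k (dcos L d) (dsin L c).
Proof.
  apply functional_extensionality. intros x.
  apply is_derive_unique, is_derive_trigpoly.
Qed.

Lemma trigpoly_periodic (L : R) (k : nat) (c d : nat -> R) (x : R) :
  L <> 0 -> trigpoly L k c d (x + L) = trigpoly L k c d x.
Proof.
  intros HL. rewrite !trigpoly_freq. f_equal. apply sum_n_m_ext. intros j.
  replace (freq L j * (x + L)) with (freq L j * x + 2 * INR j * PI)
    by (unfold freq; field; exact HL).
  now rewrite cos_period, sin_period.
Qed.

Lemma trigpoly_plus (L : R) (k : nat) (c d c' d' : nat -> R) (x : R) :
  trigpoly L k (fun j => c j + c' j) (fun j => d j + d' j) x =
  trigpoly L k c d x + trigpoly L k c' d' x.
Proof.
  rewrite !trigpoly_freq.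
  rewrite (sum_n_m_ext _ (fun j => plus
    (c j * cos (freq L j * x) + d j * sin (freq L j * x))
    (c' j * cos (freq L j * x) + d' j * sin (freq L j * x)))).
  2:{ intros j. unfold plus; simpl. ring. }
  rewrite sum_n_m_plus. unfold plus; simpl. ring.
Qed.

Lemma in_Tk_trigpoly (a b : R) (k : nat) (c d : nat -> R) :
  in_Tk a b k (trigpoly (b - a) k c d).
Proof. now exists c, d. Qed.

Lemma in_Tk_eq {a b : R} {k : nat} {f : R -> R} :
  in_Tk a b k f -> exists c d, f = trigpoly (b - a) k c d.
Proof.
  intros [c [d Hf]]. exists c, d. now apply functional_extensionality.
Qed.

Lemma Tk_Derive {a b : R} {k : nat} {f : R -> R} :
  in_Tk a b k f -> in_Tk a b k (Derive f).
Proof.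
  intros Hf. destruct (in_Tk_eq Hf) as [c [d ->]].
  rewrite Derive_trigpoly. apply in_Tk_trigpoly.
Qed.

Lemma Tk_ex_derive {a b : R} {k : nat} {f : R -> R} :
  in_Tk a b k f -> forall x, ex_derive f x.
Proof.
  intros Hf x. destruct (in_Tk_eq Hf) as [c [d ->]].
  eexists. apply is_derive_trigpoly.
Qed.

Lemma Tk_continuous {a b : R} {k : nat} {f : R -> R} :
  in_Tk a b k f -> forall x, continuous f x.
Proof.
  intros Hf x. apply (ex_derive_continuous (V := R_NormedModule)), (Tk_ex_derive Hf).
Qed.

Lemma Tk_periodic {a b : R} {k : nat} {f : R -> R} : in_Tk a b k f -> f b = f a.
Proof.
  intros Hf. destruct (Req_dec a b) as [<-|Hab]; [reflexivity|].
  destruct (in_Tk_eq Hf) as [c [d ->]].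
  rewrite <- (trigpoly_periodic (b - a) k c d a) by lra.
  f_equal. ring.
Qed.

Lemma Tk_I_sub_dxx_surjective {a b : R} {k : nat} {p : R -> R} :
  in_Tk a b k p -> exists Q, in_Tk a b k Q /\ forall x, p x = Q x - Derive (Derive Q) x.
Proof.
  intros Hp. destruct (in_Tk_eq Hp) as [c [d ->]].
  set (L := b - a).
  assert (Hm : forall j, 1 + freq L j ^ 2 <> 0).
  { intros j. pose proof (pow2_ge_0 (freq L j)). lra. }
  (* divide each mode of p by the symbol 1 + freq^2 of I - d_x^2 *)
  set (Q := trigpoly L k (fun j => c j / (1 + freq L j ^ 2)) (fun j => d j / (1 + freq L j ^ 2))).
  exists Q. split; [apply in_Tk_trigpoly|]. intros x.
  enough (HQ : Q x = trigpoly L k c d x + Derive (Derive Q) x) by lra.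
  unfold Q. rewrite !Derive_trigpoly, <- trigpoly_plus.
  f_equal; apply functional_extensionality; intros j; unfold dcos, dsin; field; apply Hm.
Qed.

Ltac solve_Tk_ex_derive :=
  repeat split; eapply Tk_ex_derive; repeat apply Tk_Derive; eassumption.

Ltac auto_derive_Tk := auto_derive; [solve_Tk_ex_derive | eta_reduce].

Ltac continuity_Tk :=
  intros ?x; apply (ex_derive_continuous (V := R_NormedModule)); auto_derive;
  solve_Tk_ex_derive.

Section GalerkinIdentities.

Variables (a b : R) (k : nat) (V W p : R -> R).
Hypotheses (HV : in_Tk a b k V) (HW : in_Tk a b k W)
  (Hp : is_L2proj a b k (fun x => V x ^ 2 / 2) p)
  (Hw : forall x, W x - Derive (Derive W) x = - Derive p x).

Lemma galerkin_mass_rate : RInt W a b = 0.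
Proof.
  destruct Hp as [HpTk _].
  apply (RInt_derive_periodic (fun x => Derive W x - p x)).
  - intros x. auto_derive_Tk. specialize (Hw x). lra.
  - exact (Tk_continuous HW).
  - now rewrite (Tk_periodic (Tk_Derive HW)), (Tk_periodic HpTk).
Qed.

(* [V W + V' W' + (V^2/2 - p) V' = (V W' - V p + V^3/6)'], using [W'' = W + p'] *)
Lemma galerkin_momentum_rate :
  RInt (fun x => V x * W x + Derive V x * Derive W x) a b = 0.
Proof.
  destruct Hp as [HpTk Horth].
  apply (RInt_eq0_of_periodic_primitive _ (fun x => (V x ^ 2 / 2 - p x) * Derive V x)
           (fun x => V x * Derive W x - V x * p x + V x ^ 3 / 6) 1).
  - intros x. auto_derive_Tk. specialize (Hw x).
    replace (Derive (Derive W) x) with (W x + Derive p x) by lra. field.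
  - continuity_Tk.
  - continuity_Tk.
  - now rewrite (Tk_periodic HV), (Tk_periodic (Tk_Derive HW)), (Tk_periodic HpTk).
  - apply Horth, (Tk_Derive HV).
Qed.

(* With [p = Q - Q''] and [W'' = W + p'], [p W] is the derivative of
   [Q W' - Q' W - Q^2/2 + Q Q'' - Q'^2/2]. *)
Lemma galerkin_energy_rate : RInt (fun x => V x ^ 2 / 2 * W x) a b = 0.
Proof.
  destruct Hp as [HpTk Horth].
  destruct (Tk_I_sub_dxx_surjective HpTk) as [Q [HQ HpQ]].
  assert (Hp' : forall x, Derive p x = Derive Q x - Derive (Derive (Derive Q)) x).
  { intros x. rewrite (Derive_ext p (fun y => Q y - Derive (Derive Q) y)) by apply HpQ.
    apply Derive_minus; solve_Tk_ex_derive. }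
  apply (RInt_eq0_of_periodic_primitive _ (fun x => (V x ^ 2 / 2 - p x) * W x)
           (fun x => Q x * Derive W x - Derive Q x * W x - Q x ^ 2 / 2
                     + Q x * Derive (Derive Q) x - Derive Q x ^ 2 / 2) (-1)).
  - intros x. auto_derive_Tk. specialize (Hw x). rewrite (HpQ x).
    replace (Derive (Derive W) x) with (W x + Derive p x) by lra. rewrite Hp'. field.
  - continuity_Tk.
  - continuity_Tk.
  - now rewrite (Tk_periodic HQ), (Tk_periodic (Tk_Derive HQ)),
      (Tk_periodic (Tk_Derive (Tk_Derive HQ))), (Tk_periodic HW), (Tk_periodic (Tk_Derive HW)).
  - apply Horth, HW.
Qed.

End GalerkinIdentities.

Definition trig_family (L : R) (k : nat) (C D : nat -> R -> R) (s x : R) : R :=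
  trigpoly L k (fun j => C j s) (fun j => D j s) x.

Lemma in_Tk_trig_family (a b : R) (k : nat) (C D : nat -> R -> R) (s : R) :
  in_Tk a b k (trig_family (b - a) k C D s).
Proof. apply in_Tk_trigpoly. Qed.

Lemma Derive_trig_family (L : R) (k : nat) (C D : nat -> R -> R) (s : R) :
  Derive (trig_family L k C D s) =
  trig_family L k (fun j z => dcos L (fun i => D i z) j) (fun j z => dsin L (fun i => C i z) j) s.
Proof. apply Derive_trigpoly. Qed.

Lemma is_derive_trig_family (L : R) (k : nat) (C D : nat -> R -> R) (C' D' : nat -> R)
    (s x : R) :
  (forall j, (j <= k)%nat -> is_derive (C j) s (C' j) /\ is_derive (D j) s (D' j)) ->
  is_derive (fun z => trig_family L k C D z x) s (trigpoly L k C' D' x).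
Proof.
  intros HCD. unfold trig_family.
  apply (is_derive_ext (fun z => C 0%nat z + sum_n_m (fun j =>
    C j z * cos (freq L j * x) + D j z * sin (freq L j * x)) 1 k)).
  { intros z. now rewrite trigpoly_freq. }
  rewrite trigpoly_freq.
  apply (is_derive_plus (C 0%nat) (fun z => sum_n_m (fun j =>
    C j z * cos (freq L j * x) + D j z * sin (freq L j * x)) 1 k)).
  - apply HCD; lia.
  - apply (is_derive_sum_n_m (fun j z => C j z * cos (freq L j * x) + D j z * sin (freq L j * x))).
    intros j Hj. destruct (HCD j ltac:(lia)) as [HC HD].
    apply (is_derive_plus (fun z => C j z * cos (freq L j * x))
                          (fun z => D j z * sin (freq L j * x)));
      [exact (is_derive_scal_l (V := R_NormedModule) _ _ _ _ HC)
      |exact (is_derive_scal_l (V := R_NormedModule) _ _ _ _ HD)].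
Qed.

Lemma continuity_2d_pt_trig_family (L : R) (k : nat) (C D : nat -> R -> R) (s x : R) :
  (forall j, (j <= k)%nat -> continuous (C j) s /\ continuous (D j) s) ->
  continuity_2d_pt (trig_family L k C D) s x.
Proof.
  intros HCD. unfold trig_family.
  apply (continuity_2d_pt_ext (fun u v => C 0%nat u + sum_n_m (fun j =>
    C j u * cos (freq L j * v) + D j u * sin (freq L j * v)) 1 k)).
  { intros u v. now rewrite trigpoly_freq. }
  apply (continuity_2d_pt_plus (fun u _ => C 0%nat u)).
  - apply continuity_2d_pt_fst, HCD; lia.
  - apply (continuity_2d_pt_sum_n_m
      (fun j u v => C j u * cos (freq L j * v) + D j u * sin (freq L j * v))).
    intros j Hj. destruct (HCD j ltac:(lia)) as [HC HD].
    apply (continuity_2d_pt_plus (fun u v => C j u * cos (freq L j * v))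
                                 (fun u v => D j u * sin (freq L j * v))).
    + apply (continuity_2d_pt_mult (fun u _ => C j u) (fun _ v => cos (freq L j * v))).
      * now apply continuity_2d_pt_fst.
      * apply continuity_2d_pt_snd, (ex_derive_continuous (V := R_NormedModule)).
        auto_derive; auto.
    + apply (continuity_2d_pt_mult (fun u _ => D j u) (fun _ v => sin (freq L j * v))).
      * now apply continuity_2d_pt_fst.
      * apply continuity_2d_pt_snd, (ex_derive_continuous (V := R_NormedModule)).
        auto_derive; auto.
Qed.

Lemma continuity_2d_pt_Derive_trig_family (L : R) (k : nat) (C D : nat -> R -> R) (s x : R) :
  (forall j, (j <= k)%nat -> continuous (C j) s /\ continuous (D j) s) ->
  continuity_2d_pt (fun z => Derive (trig_family L k C D z)) s x.
Proof.
  intros HCD.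
  apply (continuity_2d_pt_ext (trig_family L k
    (fun j z => dcos L (fun i => D i z) j) (fun j z => dsin L (fun i => C i z) j))).
  { intros z y. now rewrite Derive_trig_family. }
  apply continuity_2d_pt_trig_family. intros j Hj. destruct (HCD j Hj) as [HC HD].
  unfold dcos, dsin. split.
  - apply (continuous_mult (fun _ => freq L j) (D j)); auto using continuous_const.
  - apply (continuous_opp (fun z => freq L j * C j z)).
    apply (continuous_mult (fun _ => freq L j) (C j)); auto using continuous_const.
Qed.

Section TrigFamilyFlow.

Variables (a b : R) (k : nat) (t0 t1 : Rbar) (C D : nat -> R -> R).
Hypothesis HCD : forall j, (j <= k)%nat -> forall t, in_I t0 t1 t ->
  ex_derive (C j) t /\ continuous (Derive (C j)) t /\
  ex_derive (D j) t /\ continuous (Derive (D j)) t.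

Notation U := (trig_family (b - a) k C D).
Notation Ut := (trig_family (b - a) k (fun j => Derive (C j)) (fun j => Derive (D j))).

Lemma coefs_continuous (t : R) (j : nat) : in_I t0 t1 t -> (j <= k)%nat ->
  (continuous (C j) t /\ continuous (D j) t) /\
  (continuous (Derive (C j)) t /\ continuous (Derive (D j)) t).
Proof.
  intros Ht Hj. destruct (HCD j Hj t Ht) as [HC [HC' [HD HD']]].
  repeat split; auto; apply (ex_derive_continuous (V := R_NormedModule)); assumption.
Qed.

Lemma trig_family_is_derive_time (t x : R) : in_I t0 t1 t ->
  is_derive (fun s => U s x) t (Ut t x).
Proof.
  intros Ht. apply is_derive_trig_family. intros j Hj.
  destruct (HCD j Hj t Ht) as [HC [_ [HD _]]]. split; now apply Derive_correct.
Qed.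

Lemma Derive_trig_family_is_derive_time (t x : R) : in_I t0 t1 t ->
  is_derive (fun s => Derive (U s) x) t (Derive (Ut t) x).
Proof.
  intros Ht. rewrite Derive_trig_family.
  apply (is_derive_ext (fun s => trig_family (b - a) k
    (fun j z => dcos (b - a) (fun i => D i z) j) (fun j z => dsin (b - a) (fun i => C i z) j) s x)).
  { intros s. now rewrite Derive_trig_family. }
  apply is_derive_trig_family. intros j Hj.
  destruct (HCD j Hj t Ht) as [HC [_ [HD _]]]. unfold dcos, dsin. split.
  - now apply is_derive_scal, Derive_correct.
  - apply (is_derive_opp (fun z => freq (b - a) j * C j z)).
    now apply is_derive_scal, Derive_correct.
Qed.

Lemma galerkin_step_trig_family (u : R -> R -> R) (r : R) :
  (forall t, in_I t0 t1 t -> forall x, u t x = U t x) ->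
  bbm_galerkin_solution a b k t0 t1 u -> in_I t0 t1 r ->
  exists p, is_L2proj a b k (fun x => U r x ^ 2 / 2) p /\
    forall x, Ut r x - Derive (Derive (Ut r)) x = - Derive p x.
Proof.
  intros Hu Hsol Hr. destruct (Hsol r Hr) as [p [Hp [_ Hw]]].
  assert (Hut : forall x, Derive (fun z => u z x) r = Ut r x).
  { intros x. apply is_derive_unique, (is_derive_ext_loc (fun z => U z x)).
    - refine (filter_imp _ _ _ (in_I_locally _ _ _ Hr)). intros z Hz. now rewrite (Hu z Hz).
    - now apply trig_family_is_derive_time. }
  rewrite (functional_extensionality _ _ (Hu r Hr)) in Hp.
  exists p. split; [exact Hp|]. intros x.
  specialize (Hw x). now rewrite Hut, (Derive_n_ext _ _ 2 x Hut) in Hw.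
Qed.

Lemma mass_trig_family_rate (t : R) : in_I t0 t1 t ->
  is_derive (fun s => mass a b (U s)) t (RInt (Ut t) a b).
Proof.
  intros Ht. apply (is_derive_RInt_param_cont U Ut).
  - refine (filter_imp _ _ _ (in_I_locally _ _ _ Ht)). intros s Hs x.
    now apply trig_family_is_derive_time.
  - intros x. apply continuity_2d_pt_trig_family. intros j Hj.
    apply (coefs_continuous t j Ht Hj).
  - apply filter_forall. intros s. apply (Tk_continuous (in_Tk_trig_family a b k C D s)).
Qed.

Lemma momentum_trig_family_rate (t : R) : in_I t0 t1 t ->
  is_derive (fun s => momentum a b (U s)) t
    (RInt (fun x => U t x * Ut t x + Derive (U t) x * Derive (Ut t) x) a b).
Proof.
  intros Ht.
  apply (is_derive_RInt_param_cont (fun s x => U s x ^ 2 / 2 + Derive (U s) x ^ 2 / 2)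
           (fun s x => U s x * Ut s x + Derive (U s) x * Derive (Ut s) x)).
  - refine (filter_imp _ _ _ (in_I_locally _ _ _ Ht)). intros s Hs x.
    apply (is_derive_plus (fun z => U z x ^ 2 / 2) (fun z => Derive (U z) x ^ 2 / 2)).
    + apply (is_derive_sq_half (fun z => U z x)), trig_family_is_derive_time, Hs.
    + apply (is_derive_sq_half (fun z => Derive (U z) x)), Derive_trig_family_is_derive_time, Hs.
  - intros x.
    assert (Hcoef := fun j Hj => coefs_continuous t j Ht Hj).
    apply continuity_2d_pt_plus; apply continuity_2d_pt_mult;
      [apply continuity_2d_pt_trig_family | apply continuity_2d_pt_trig_family
      |apply continuity_2d_pt_Derive_trig_family | apply continuity_2d_pt_Derive_trig_family];
      intros j Hj; apply (Hcoef j Hj).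
  - apply filter_forall. intros s. pose proof (in_Tk_trig_family a b k C D s). continuity_Tk.
Qed.

Lemma energy_trig_family_rate (t : R) : in_I t0 t1 t ->
  is_derive (fun s => energy a b (U s)) t (RInt (fun x => U t x ^ 2 / 2 * Ut t x) a b).
Proof.
  intros Ht.
  apply (is_derive_RInt_param_cont (fun s x => U s x ^ 3 / 6) (fun s x => U s x ^ 2 / 2 * Ut s x)).
  - refine (filter_imp _ _ _ (in_I_locally _ _ _ Ht)). intros s Hs x.
    apply (is_derive_cube_sixth (fun z => U z x)), trig_family_is_derive_time, Hs.
  - intros x.
    assert (Hcoef := fun j Hj => coefs_continuous t j Ht Hj).
    apply (continuity_2d_pt_ext (fun s y => U s y * U s y * / 2 * Ut s y)).
    { intros s y. unfold Rdiv. ring. }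
    repeat apply continuity_2d_pt_mult; try apply continuity_2d_pt_const;
      apply continuity_2d_pt_trig_family; intros j Hj; apply (Hcoef j Hj).
  - apply filter_forall. intros s. pose proof (in_Tk_trig_family a b k C D s). continuity_Tk.
Qed.

End TrigFamilyFlow.

Theorem theorem2p1 (a b : R) (k : nat) (t0 t1 : Rbar) (u : R -> R -> R) :
  a < b ->
  Rbar_lt t0 t1 ->
  C1_in_Tk a b k t0 t1 u ->
  bbm_galerkin_solution a b k t0 t1 u ->
  forall t s, in_I t0 t1 t -> in_I t0 t1 s ->
    mass a b (u t) = mass a b (u s) /\
    momentum a b (u t) = momentum a b (u s) /\
    energy a b (u t) = energy a b (u s).
Proof.
  intros _ _ [C [D [HCD Hu]]] Hsol t s Ht Hs.
  set (U := trig_family (b - a) k C D).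
  set (Ut := trig_family (b - a) k (fun j => Derive (C j)) (fun j => Derive (D j))).
  assert (HuU : forall z, in_I t0 t1 z -> u z = U z).
  { intros z Hz. apply functional_extensionality, Hu, Hz. }
  assert (Hstep := fun r => galerkin_step_trig_family a b k t0 t1 C D HCD u r Hu Hsol).
  assert (HU : forall r, in_Tk a b k (U r)) by (intros; apply in_Tk_trig_family).
  assert (HUt : forall r, in_Tk a b k (Ut r)) by (intros; apply in_Tk_trig_family).
  rewrite (HuU t Ht), (HuU s Hs).
  split; [|split].
  - apply (eq_is_derive_in_I (fun r => mass a b (U r)) (fun r => RInt (Ut r) a b) t0 t1); auto.
    + intros r Hr. eapply mass_trig_family_rate; eauto.
    + intros r Hr. destruct (Hstep r Hr) as [p [Hp Hw]]. eapply galerkin_mass_rate; eauto.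
  - apply (eq_is_derive_in_I (fun r => momentum a b (U r)) (fun r =>
      RInt (fun x => U r x * Ut r x + Derive (U r) x * Derive (Ut r) x) a b) t0 t1); auto.
    + intros r Hr. eapply momentum_trig_family_rate; eauto.
    + intros r Hr. destruct (Hstep r Hr) as [p [Hp Hw]]. eapply galerkin_momentum_rate; eauto.
  - apply (eq_is_derive_in_I (fun r => energy a b (U r))
      (fun r => RInt (fun x => U r x ^ 2 / 2 * Ut r x) a b) t0 t1); auto.
    + intros r Hr. eapply energy_trig_family_rate; eauto.
    + intros r Hr. destruct (Hstep r Hr) as [p [Hp Hw]]. eapply galerkin_energy_rate; eauto.
Qed.
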